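(* Let $S\subseteq[0,1]$ be the Smith–Volterra–Cantor set $\mathrm{SVC}(4)$ and let $f\colon[0,1]\to\mathbb{R}$ be the function defined from it as in the context. Then $f$ is not differentiable at any point of $S$.
   Context: Construction of $S$: let $S_0=[0,1]$. If $S_{n-1}=\bigcup_k[a_k,b_k]$ (finite disjoint union of closed ''component intervals'') for $n\geqslant1$, put $S_n=\bigcup_k\left(\left[a_k,\frac{a_k+b_k}{2}-\frac{1}{2^{2n+1}}\right]\cup\left[\frac{a_k+b_k}{2}+\frac{1}{2^{2n+1}},b_k\right]\right)$, i.e. an open interval of length $1/4^n$ centred at the midpoint is removed from each component interval. Let $S=\bigcap_{n\in\mathbb{N}}S_n$. The set $[0,1]\setminus S$ is a countable disjoint union of open intervals (the contiguous intervals of $S$); let $\{(a_n,b_n)\}_{n\in\mathbb{N}}$ be an enumeration of them and $c_n=(a_n+b_n)/2$. Define $f\colon[0,1]\to\mathbb{R}$ by $f=0$ on $S$, and on $(a_n,b_n)$: $f(x)=(x-a_n)^{1/4}\sin\big((x-a_n)^{-7/4}\big)$ for $a_n<x\leqslant c_n$, and $f(x)=(b_n-x)^{1/4}\sin\big((b_n-x)^{-7/4}\big)$ for $c_n\leqslant x<b_n$. (At the points $0,1$ differentiability is understood one-sidedly.) *)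

From Stdlib Require Import Reals Lra List ClassicalEpsilon.
Open Scope R_scope.

(* Half-length of the open interval removed at stage n (n >= 1): the removed
   interval has length 1/4^n, i.e. half-length 1/2^(2n+1). *)
Definition half_gap (n : nat) : R := / 2 ^ (2 * n + 1).

Definition midpt (p : R * R) : R := (fst p + snd p) / 2.

Definition split_comp (n : nat) (p : R * R) : list (R * R) :=
  (fst p, midpt p - half_gap n) :: (midpt p + half_gap n, snd p) :: nil.

Fixpoint comps (n : nat) : list (R * R) :=
  match n with
  | O => (0, 1) :: nil
  | S m => flat_map (split_comp (S m)) (comps m)
  end.

Definition in_Sn (n : nat) (x : R) : Prop :=
  exists p, In p (comps n) /\ fst p <= x <= snd p.

Definition in_S (x : R) : Prop := forall n, in_Sn n x.

(* Contiguous intervals of S: the open intervals removed at some stage n >= 1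
   from a component interval of S_(n-1).  p = (a_n, b_n). *)
Definition contiguous (p : R * R) : Prop :=
  exists n q, In q (comps n) /\
    fst p = midpt q - half_gap (S n) /\ snd p = midpt q + half_gap (S n).

Definition f_piece (a b x : R) : R :=
  if Rle_dec x ((a + b) / 2)
  then Rpower (x - a) (1 / 4) * sin (Rpower (x - a) (- (7 / 4)))
  else Rpower (b - x) (1 / 4) * sin (Rpower (b - x) (- (7 / 4))).

(* svc_f : 0 on S (and, irrelevantly, outside [0,1]); on a contiguous interval
   (a,b) (these are pairwise disjoint, so the choice is unique) the formula. *)
Definition svc_f (x : R) : R :=
  match excluded_middle_informative
          (exists p : R * R, contiguous p /\ fst p < x < snd p) with
  | left H =>
      let p := proj1_sig (constructive_indefinite_description _ H) in
      f_piece (fst p) (snd p) x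
  | right _ => 0
  end.

(* Differentiability of g : [0,1] -> R at x, relative to [0,1]
   (one-sided at the endpoints 0 and 1). *)
Definition differentiable_on01_at (g : R -> R) (x : R) : Prop :=
  exists l : R, forall eps : R, 0 < eps -> exists delta : R, 0 < delta /\
    forall y : R, 0 <= y <= 1 -> y <> x -> Rabs (y - x) < delta ->
      Rabs ((g y - g x) / (y - x) - l) < eps.

From Stdlib Require Import Reals Lra Lia List ZArith ClassicalEpsilon.
Open Scope R_scope.

(* Every x in S lies, for each n, in a component interval of S_n of length
   L_n ~ 2^-(n+1), and the gap removed from that component at stage n+1 has
   half-length h = 2^-(2n+3) ~ L_n^2 / 2 and lies within L_n of x.  Near an end
   a of the gap, f (a + t) = t^(1/4) sin (t^(-7/4)), so f vanishes somewhere on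
   the gap and somewhere else equals t^(1/4) >= (h/2)^(1/4) ~ L_n^(1/2) / 2 >= L_n.
   As f x = 0, the difference quotients of f at x take the value 0 and values of
   modulus >= 1 arbitrarily close to x. *)

(* Solves L_0 = 1, L_(n+1) = L_n / 2 - half_gap (n+1). *)
Definition comp_len (n : nat) : R := (2 ^ n + 1) / 2 ^ (2 * n + 1).

Definition gap (n : nat) (q : R * R) : R * R :=
  (midpt q - half_gap (S n), midpt q + half_gap (S n)).

Lemma pow2_pos n : 0 < 2 ^ n.
Proof. apply pow_lt; lra. Qed.

Lemma pow2_double_succ n : 2 ^ (2 * n + 1) = 2 * (2 ^ n) ^ 2.
Proof.
  rewrite pow_add, <- pow_mult.
  replace (2 * n)%nat with (n * 2)%nat by lia.
  simpl; ring.
Qed.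

Lemma half_gap_pos n : 0 < half_gap n.
Proof. apply Rinv_0_lt_compat, pow2_pos. Qed.

Lemma comp_len_pos n : 0 < comp_len n.
Proof.
  pose proof (pow2_pos n); pose proof (pow2_pos (2 * n + 1)).
  apply Rdiv_lt_0_compat; lra.
Qed.

Lemma comp_len_succ n : comp_len n / 2 - half_gap (S n) = comp_len (S n).
Proof.
  unfold comp_len, half_gap; rewrite !pow2_double_succ; simpl pow.
  pose proof (pow2_pos n); field; lra.
Qed.

Lemma split_comp_pieces n q r :
  snd q - fst q = comp_len n -> In r (split_comp (S n) q) ->
  fst q <= fst r /\ snd r <= snd q /\ snd r - fst r = comp_len (S n) /\
  (snd r <= fst (gap n q) \/ snd (gap n q) <= fst r).
Proof.
  intros Hq Hr.
  pose proof (comp_len_succ n); pose proof (comp_len_pos (S n)).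
  pose proof (half_gap_pos (S n)).
  unfold split_comp, gap, midpt in *; cbn [fst snd] in *.
  destruct Hr as [<- | [<- | []]]; cbn [fst snd];
    (split; [lra |]); (split; [lra |]); (split; [lra |]); [left | right]; lra.
Qed.

Lemma comps_bounds n q :
  In q (comps n) -> 0 <= fst q /\ snd q <= 1 /\ snd q - fst q = comp_len n.
Proof.
  revert q; induction n as [|n IH]; intros q Hq.
  - destruct Hq as [<- | []]; unfold comp_len; simpl; lra.
  - apply in_flat_map in Hq as [q0 [Hq0 Hr]].
    destruct (IH q0 Hq0) as (A & B & C).
    destruct (split_comp_pieces n q0 q C Hr) as (D & E & F & _); lra.
Qed.

Lemma comps_disjoint n q q' y :
  In q (comps n) -> In q' (comps n) ->
  fst q <= y <= snd q -> fst q' <= y <= snd q' -> q = q'.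
Proof.
  revert q q'; induction n as [|n IH]; intros q q' Hq Hq' Hy Hy'.
  - destruct Hq as [<- | []], Hq' as [<- | []]; reflexivity.
  - apply in_flat_map in Hq as [p [Hp Hq]], Hq' as [p' [Hp' Hq']].
    destruct (comps_bounds n p Hp) as (_ & _ & Lp).
    destruct (comps_bounds n p' Hp') as (_ & _ & Lp').
    pose proof (split_comp_pieces n p q Lp Hq) as Pq.
    pose proof (split_comp_pieces n p' q' Lp' Hq') as Pq'.
    assert (p' = p) as -> by (apply (IH p' p Hp' Hp); lra).
    pose proof (half_gap_pos (S n)).
    unfold split_comp, gap, midpt in *; cbn [fst snd] in *.
    destruct Hq as [<- | [<- | []]], Hq' as [<- | [<- | []]]; cbn [fst snd] in *;
      solve [reflexivity | lra].
Qed.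

Lemma in_Sn_succ n y : in_Sn (S n) y -> in_Sn n y.
Proof.
  intros [r [Hr Hy]]; apply in_flat_map in Hr as [q [Hq Hr]].
  destruct (comps_bounds n q Hq) as (_ & _ & Lq).
  destruct (split_comp_pieces n q r Lq Hr) as (A & B & _).
  exists q; split; [exact Hq | lra].
Qed.

Lemma in_Sn_le m n y : (m <= n)%nat -> in_Sn n y -> in_Sn m y.
Proof. induction 1; auto using in_Sn_succ. Qed.

Lemma gap_sub_comp n q y :
  In q (comps n) -> fst (gap n q) < y < snd (gap n q) -> fst q < y < snd q.
Proof.
  intros Hq Hy; destruct (comps_bounds n q Hq) as (_ & _ & Lq).
  pose proof (comp_len_succ n); pose proof (comp_len_pos (S n)).
  unfold gap, midpt in *; cbn [fst snd] in *; lra.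
Qed.

Lemma gap_not_in_Sn n q y :
  In q (comps n) -> fst (gap n q) < y < snd (gap n q) -> ~ in_Sn (S n) y.
Proof.
  intros Hq Hy [r [Hr Hyr]]; apply in_flat_map in Hr as [p [Hp Hr]].
  destruct (comps_bounds n p Hp) as (_ & _ & Lp).
  destruct (split_comp_pieces n p r Lp Hr) as (A & B & _ & D).
  pose proof (gap_sub_comp n q y Hq Hy).
  assert (p = q) as -> by (apply (comps_disjoint n p q y); auto; lra).
  destruct D; lra.
Qed.

Lemma contiguous_unique n q p y :
  In q (comps n) -> fst (gap n q) < y < snd (gap n q) ->
  contiguous p -> fst p < y < snd p -> p = gap n q.
Proof.
  intros Hq Hy [m [q' [Hq' [E1 E2]]]] Hyp.
  assert (Hy' : fst (gap m q') < y < snd (gap m q')) by (unfold gap; cbn [fst snd]; lra).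
  pose proof (gap_sub_comp n q y Hq Hy); pose proof (gap_sub_comp m q' y Hq' Hy').
  assert (Sn : in_Sn n y) by (exists q; split; [exact Hq | lra]).
  assert (Sm : in_Sn m y) by (exists q'; split; [exact Hq' | lra]).
  destruct (lt_eq_lt_dec m n) as [[Hmn | <-] | Hnm].
  - exfalso; apply (gap_not_in_Sn m q' y Hq' Hy'), (in_Sn_le (S m) n y Hmn Sn).
  - assert (q' = q) as -> by (apply (comps_disjoint m q' q y); auto; lra).
    destruct p; unfold gap; cbn [fst snd] in *; congruence.
  - exfalso; apply (gap_not_in_Sn n q y Hq Hy), (in_Sn_le (S n) m y Hnm Sm).
Qed.

Lemma svc_f_gap n q y :
  In q (comps n) -> fst (gap n q) < y < snd (gap n q) ->
  svc_f y = f_piece (fst (gap n q)) (snd (gap n q)) y.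
Proof.
  intros Hq Hy; unfold svc_f.
  destruct (excluded_middle_informative _) as [e | ne].
  - destruct (constructive_indefinite_description _ e) as [p [Hp Hyp]]; cbn.
    now rewrite (contiguous_unique n q p y Hq Hy Hp Hyp).
  - exfalso; apply ne; exists (gap n q); split; [| exact Hy].
    exists n, q; auto.
Qed.

Lemma svc_f_in_S x : in_S x -> svc_f x = 0.
Proof.
  intros HS; unfold svc_f.
  destruct (excluded_middle_informative _) as [[p [[n [q [Hq [E1 E2]]]] Hx]] | _];
    [exfalso | reflexivity].
  apply (gap_not_in_Sn n q x Hq); [unfold gap; cbn [fst snd]; lra | apply HS].
Qed.

Lemma f_piece_near_ends a b t : 0 < t < (b - a) / 2 ->
  f_piece a b (a + t) = Rpower t (1 / 4) * sin (Rpower t (- (7 / 4))) /\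
  f_piece a b (b - t) = Rpower t (1 / 4) * sin (Rpower t (- (7 / 4))).
Proof.
  intros Ht; unfold f_piece; split.
  - destruct (Rle_dec _ _); [| lra]; now replace (a + t - a) with t by ring.
  - destruct (Rle_dec _ _); [lra |]; now replace (b - (b - t)) with t by ring.
Qed.

Lemma svc_f_values_near n q x t :
  In q (comps n) -> fst q <= x <= snd q -> ~ (fst (gap n q) < x < snd (gap n q)) ->
  0 < t < half_gap (S n) ->
  exists y, 0 <= y <= 1 /\ y <> x /\ Rabs (y - x) <= comp_len n /\
    svc_f y = Rpower t (1 / 4) * sin (Rpower t (- (7 / 4))).
Proof.
  intros Hq Hx Hnx Ht.
  destruct (comps_bounds n q Hq) as (A & B & _).
  assert (Hends : forall y, fst (gap n q) < y < snd (gap n q) ->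
            0 <= y <= 1 /\ y <> x /\ Rabs (y - x) <= comp_len n).
  { intros y Hy; destruct (gap_sub_comp n q y Hq Hy).
    destruct (comps_bounds n q Hq) as (_ & _ & L).
    split; [lra | split].
    - intros ->; contradiction.
    - apply Rabs_le; lra. }
  assert (Hw : snd (gap n q) - fst (gap n q) = 2 * half_gap (S n))
    by (unfold gap; cbn [fst snd]; ring).
  destruct (f_piece_near_ends (fst (gap n q)) (snd (gap n q)) t ltac:(lra)) as [Fl Fr].
  destruct (Rle_or_lt x (fst (gap n q))) as [Hleft | Hright].
  - exists (fst (gap n q) + t).
    assert (Hy : fst (gap n q) < fst (gap n q) + t < snd (gap n q)) by lra.
    rewrite (svc_f_gap n q _ Hq Hy); pose proof (Hends _ Hy); tauto.
  - exists (snd (gap n q) - t).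
    assert (Hy : fst (gap n q) < snd (gap n q) - t < snd (gap n q)) by lra.
    rewrite (svc_f_gap n q _ Hq Hy); pose proof (Hends _ Hy); tauto.
Qed.

Lemma exists_nat_mult_between A c : 0 <= A -> 0 < c ->
  exists k : nat, A < INR k * c <= A + c.
Proof.
  intros HA Hc; destruct (archimed (A / c)) as [Hup Hup'].
  assert (Hq : 0 <= A / c) by (apply Rmult_le_pos; [lra | left; apply Rinv_0_lt_compat; lra]).
  assert (Hz : (0 <= up (A / c))%Z) by (apply le_IZR; lra).
  exists (Z.to_nat (up (A / c))).
  rewrite INR_IZR_INZ, Z2Nat.id by exact Hz.
  assert (A = A / c * c) by (field; lra).
  split; nra.
Qed.

Lemma sin_root_between A : 0 <= A -> exists s, A < s <= A + PI /\ sin s = 0.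
Proof.
  intros HA; destruct (exists_nat_mult_between A PI HA PI_RGT_0) as [k Hk].
  exists (INR k * PI); split; [exact Hk |].
  apply sin_eq_0_1; exists (Z.of_nat k); now rewrite <- INR_IZR_INZ.
Qed.

Lemma sin_one_between A : 0 <= A -> exists s, A < s <= A + 3 * PI /\ sin s = 1.
Proof.
  intros HA; pose proof PI_RGT_0.
  destruct (exists_nat_mult_between A (2 * PI) HA ltac:(lra)) as [k Hk].
  exists (PI / 2 + 2 * INR k * PI); split; [lra |].
  now rewrite sin_period, sin_PI2.
Qed.

Lemma Rpower_pos x y : 0 < Rpower x y.
Proof. apply exp_pos. Qed.

Lemma Rpower_exp_cancel s a b : 0 < s -> a * b = 1 -> Rpower (Rpower s a) b = s.
Proof. intros Hs Hab; now rewrite Rpower_mult, Hab, Rpower_1. Qed.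

Lemma Rpower_opp_lt s1 s2 e : 0 < e -> 0 < s1 < s2 -> Rpower s2 (- e) < Rpower s1 (- e).
Proof.
  intros He Hs; rewrite !Rpower_Ropp.
  apply Rinv_lt_contravar; [apply Rmult_lt_0_compat; apply Rpower_pos |].
  now apply Rlt_Rpower_l.
Qed.

Lemma Rpower_opp_le s1 s2 e : 0 <= e -> 0 < s1 <= s2 -> Rpower s2 (- e) <= Rpower s1 (- e).
Proof.
  intros He Hs; rewrite !Rpower_Ropp.
  apply Rinv_le_contravar; [apply Rpower_pos |].
  now apply Rle_Rpower_l.
Qed.

Lemma Rinv_le_Rpower_opp h e : 0 < h <= 1 -> 1 <= e -> / h <= Rpower h (- e).
Proof.
  intros Hh He.
  replace (Rpower h (- e)) with (Rpower (/ h) e)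
    by (unfold Rpower; rewrite ln_Rinv by lra; f_equal; ring).
  rewrite <- (Rpower_1 (/ h)) at 1 by (apply Rinv_0_lt_compat; lra).
  apply Rle_Rpower; [rewrite <- Rinv_1; apply Rinv_le_contravar |]; lra.
Qed.

Lemma oscillation_points h : 0 < h <= / 16 -> exists t0 t1,
  0 < t0 < h /\ h / 2 <= t1 < h /\
  sin (Rpower t0 (- (7 / 4))) = 0 /\ sin (Rpower t1 (- (7 / 4))) = 1.
Proof.
  intros Hh; set (A := Rpower h (- (7 / 4))).
  (* A >= 16 > 3 PI puts s0, s1 in (A, 2 A], and 2^(-4/7) >= 1/2. *)
  assert (HA : 16 <= A).
  { apply Rle_trans with (/ h); [| apply Rinv_le_Rpower_opp; lra].
    rewrite <- (Rinv_inv 16); apply Rinv_le_contravar; lra. }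
  assert (HAh : Rpower A (- (4 / 7)) = h) by (apply Rpower_exp_cancel; [lra | field]).
  assert (Hinv : forall s, 0 < s -> Rpower (Rpower s (- (4 / 7))) (- (7 / 4)) = s)
    by (intros s Hs; apply Rpower_exp_cancel; [lra | field]).
  pose proof PI_RGT_0; pose proof PI_4.
  destruct (sin_root_between A ltac:(lra)) as [s0 [Hs0 Hsin0]].
  destruct (sin_one_between A ltac:(lra)) as [s1 [Hs1 Hsin1]].
  exists (Rpower s0 (- (4 / 7))), (Rpower s1 (- (4 / 7))).
  rewrite !Hinv by lra.
  pose proof (Rpower_pos s0 (- (4 / 7))); pose proof (Rpower_pos s1 (- (4 / 7))).
  assert (Hlt : forall s, A < s -> Rpower s (- (4 / 7)) < h)
    by (intros s Hs; rewrite <- HAh; apply Rpower_opp_lt; lra).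
  assert (Hhalf : h / 2 <= Rpower (2 * A) (- (4 / 7))).
  { rewrite <- Rpower_mult_distr, HAh by lra.
    assert (/ 2 <= Rpower 2 (- (4 / 7))); [| nra].
    rewrite <- (Rpower_1 2) at 1 by lra; rewrite <- Rpower_Ropp.
    apply Rle_Rpower; lra. }
  split; [split; [lra | apply Hlt; lra] |].
  split; [split; [| apply Hlt; lra] |]; [| tauto].
  apply (Rle_trans _ _ _ Hhalf), Rpower_opp_le; lra.
Qed.

Lemma comp_len_scale delta : 0 < delta -> exists n,
  comp_len n < delta /\ half_gap (S n) <= / 16 /\ comp_len n ^ 4 <= half_gap (S n) / 2.
Proof.
  intros Hd.
  assert (Hhalf : Rabs (/ 2) < 1) by (rewrite Rabs_pos_eq; lra).
  assert (Hmin : 0 < Rmin delta (/ 4)) by (apply Rmin_pos; lra).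
  destruct (pow_lt_1_zero (/ 2) Hhalf _ Hmin) as [n Hn]; exists n.
  specialize (Hn n (le_n n)); rewrite pow_inv in Hn.
  set (u := / 2 ^ n) in Hn.
  pose proof (pow2_pos n).
  assert (Hu : 0 < u) by (apply Rinv_0_lt_compat; lra).
  rewrite Rabs_pos_eq in Hn by lra.
  pose proof (Rmin_l delta (/ 4)); pose proof (Rmin_r delta (/ 4)).
  assert (HL : comp_len n = u / 2 + u ^ 2 / 2)
    by (unfold comp_len, u; rewrite pow2_double_succ; field; lra).
  assert (Hh : half_gap (S n) = u ^ 2 / 8)
    by (unfold half_gap, u; rewrite pow2_double_succ; simpl pow; field; lra).
  assert (HLu : comp_len n <= u) by (rewrite HL; nra).
  assert (Hu2 : u ^ 2 <= / 16) by nra.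
  rewrite Hh; split; [lra | split; [lra |]].
  apply Rle_trans with (u ^ 4); [apply pow_incr; pose proof (comp_len_pos n); lra |].
  replace (u ^ 4) with (u ^ 2 * u ^ 2) by ring; nra.
Qed.

Lemma pow_le_Rpower_inv k L t : (0 < k)%nat -> 0 < L -> L ^ k <= t ->
  L <= Rpower t (/ INR k).
Proof.
  intros Hk HL Ht.
  rewrite <- (Rpower_exp_cancel L (INR k) (/ INR k)) at 1
    by (auto; apply Rinv_r, not_0_INR; lia).
  apply Rle_Rpower_l; [left; apply Rinv_0_lt_compat, lt_0_INR; lia |].
  rewrite Rpower_pow by exact HL; split; [apply pow_lt |]; lra.
Qed.

Lemma one_le_Rabs_div P d : d <> 0 -> Rabs d <= P -> 1 <= Rabs (P / d).
Proof.
  intros Hd HP; pose proof (Rabs_pos_lt d Hd).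
  unfold Rdiv; rewrite Rabs_mult, Rabs_inv, (Rabs_pos_eq P) by lra.
  apply (Rmult_le_reg_r (Rabs d)); [lra |].
  rewrite Rmult_assoc, Rinv_l; lra.
Qed.

Lemma not_differentiable_on01_of_slopes g x :
  (forall delta, 0 < delta -> exists y z,
     0 <= y <= 1 /\ y <> x /\ Rabs (y - x) < delta /\
     0 <= z <= 1 /\ z <> x /\ Rabs (z - x) < delta /\
     1 <= Rabs ((g y - g x) / (y - x) - (g z - g x) / (z - x))) ->
  ~ differentiable_on01_at g x.
Proof.
  intros Hslopes [l Hl].
  destruct (Hl (1 / 2) ltac:(lra)) as [d [Hd Hnear]].
  destruct (Hslopes d Hd) as (y & z & Hy & Hyx & Hyd & Hz & Hzx & Hzd & Hfar).
  pose proof (Hnear y Hy Hyx Hyd); pose proof (Hnear z Hz Hzx Hzd).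
  set (sy := (g y - g x) / (y - x)) in *; set (sz := (g z - g x) / (z - x)) in *.
  pose proof (Rabs_triang (sy - l) (l - sz)) as Htri.
  rewrite (Rabs_minus_sym l sz) in Htri.
  replace (sy - l + (l - sz)) with (sy - sz) in Htri by ring.
  lra.
Qed.

Theorem theorem4p4 : forall x : R, in_S x -> ~ differentiable_on01_at svc_f x.
Proof.
  intros x HS; apply not_differentiable_on01_of_slopes; intros delta Hdelta.
  destruct (comp_len_scale delta Hdelta) as (n & Hlen & Hsmall & Hscale).
  destruct (HS n) as [q [Hq Hxq]].
  assert (Hnx : ~ (fst (gap n q) < x < snd (gap n q)))
    by (intros Hg; exact (gap_not_in_Sn n q x Hq Hg (HS (S n)))).
  pose proof (half_gap_pos (S n)).
  destruct (oscillation_points (half_gap (S n)) ltac:(lra))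
    as (t0 & t1 & Ht0 & Ht1 & Hsin0 & Hsin1).
  destruct (svc_f_values_near n q x t0 Hq Hxq Hnx ltac:(lra)) as (y & Hy & Hyx & Hyd & Fy).
  destruct (svc_f_values_near n q x t1 Hq Hxq Hnx ltac:(lra)) as (z & Hz & Hzx & Hzd & Fz).
  assert (Hamp : comp_len n <= Rpower t1 (1 / 4)).
  { replace (1 / 4) with (/ INR 4) by (simpl; lra).
    apply pow_le_Rpower_inv; [lia | apply comp_len_pos | lra]. }
  exists y, z; do 2 (split; [assumption |]); split; [lra |].
  do 2 (split; [assumption |]); split; [lra |].
  rewrite Fy, Fz, Hsin0, Hsin1, (svc_f_in_S x HS).
  replace (_ - _) with (- ((Rpower t1 (1 / 4)) / (z - x))) 
    by (field; split; apply Rminus_eq_contra; assumption).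
  rewrite Rabs_Ropp; apply one_le_Rabs_div; [apply Rminus_eq_contra; exact Hzx | lra].
Qed.
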